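(* Let $A\in\mathbb{R}^{M\times N}$ with $M\ge N$, let $\tau\ge 0$, and let $B=\begin{bmatrix}-\tau I_M & A\\ A^T & -\tau I_N\end{bmatrix}$. Let $\widetilde U\in\mathbb{R}^{M\times k}$, $\widetilde V\in\mathbb{R}^{N\times k}$ have orthonormal columns, let $(\theta_1,c_1,d_1)$ be a singular triplet of $H=\widetilde U^TA\widetilde V$ with $\theta_1$ closest to $\tau$ among the singular values of $H$, set $\tilde u_1=\widetilde Uc_1$, $\tilde v_1=\widetilde Vd_1$, and $r=\begin{bmatrix}A\tilde v_1-\theta_1\tilde u_1\\ A^T\tilde u_1-\theta_1\tilde v_1\end{bmatrix}$. Let $\widetilde P_1\in\mathbb{R}^{M\times(M-1)}$ and $\widetilde Q_1\in\mathbb{R}^{N\times(N-1)}$ be such that $[\tilde u_1,\widetilde P_1]$ and $[\tilde v_1,\widetilde Q_1]$ are orthogonal, and set $\widetilde W_1=\begin{bmatrix}\widetilde P_1&0\\0&\widetilde Q_1\end{bmatrix}$, $$\widetilde B_1'=\widetilde W_1^TB\widetilde W_1=\begin{bmatrix}-\tau I_{M-1}&\widetilde P_1^TA\widetilde Q_1\\ \widetilde Q_1^TA^T\widetilde P_1&-\tau I_{N-1}\end{bmatrix},\qquad \widetilde B_1=\widetilde W_1\widetilde B_1'\widetilde W_1^T .$$ Consider the correction equation $$\begin{bmatrix}I-\tilde u_1\tilde u_1^T&0\\0&I-\tilde v_1\tilde v_1^T\end{bmatrix}B\begin{bmatrix}I-\tilde u_1\tilde u_1^T&0\\0&I-\tilde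 v_1\tilde v_1^T\end{bmatrix}w=-r,\qquad\text{i.e. } \widetilde B_1w=-r,$$ for $w=(s^T,t^T)^T$ with $s\perp\tilde u_1$, $t\perp\tilde v_1$. Then its solution is $w=\widetilde W_1z$, where $z\in\mathbb{R}^{M+N-2}$ solves $\widetilde B_1'z=-r'$ with $r'=\widetilde W_1^Tr$. Moreover, if MINRES is applied to $\widetilde B_1w=-r$ and to $\widetilde B_1'z=-r'$ with initial guesses $\tilde w_0$ and $\tilde z_0$ satisfying $\tilde w_0=\widetilde W_1\tilde z_0$, then the $j$th iterates satisfy $\tilde w_j=\widetilde W_1\tilde z_j$ for $j=1,2,\dots,M+N-2$, and, writing $r_{\mathrm{in},j}=\widetilde B_1\tilde w_j+r$ and $r'_{\mathrm{in},j}=\widetilde B_1'\tilde z_j+r'$, one has $\|r_{\mathrm{in},j}\|=\|r'_{\mathrm{in},j}\|$ for $j=0,1,\dots,M+N-2$.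
   Context: $\|\cdot\|$ is the Euclidean vector norm / spectral matrix norm. MINRES applied to a symmetric system $Cx=-b$ with initial guess $x_0$ produces, at step $j$, the iterate $x_j\in x_0+\mathcal{K}_j(C,Cx_0+b)$ minimizing $\|Cx+b\|$ over that affine space, where $\mathcal{K}_j(C,y)=\mathrm{span}\{y,Cy,\dots,C^{j-1}y\}$. By construction, $r$ satisfies $r_{1:M}\perp\tilde u_1$ and $r_{M+1:M+N}\perp\tilde v_1$. *)

From HB Require Import structures.
From mathcomp Require Import all_boot all_order all_algebra.
Set Implicit Arguments. Unset Strict Implicit. Unset Printing Implicit Defensive.
Import Order.TTheory GRing.Theory Num.Theory.
Local Open Scope ring_scope.

Definition vnorm (R : rcfType) (n : nat) (x : 'cV[R]_n) : R :=
  Num.sqrt (\sum_(i < n) x i 0 ^+ 2).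

Definition in_krylov (R : rcfType) (n : nat) (C : 'M[R]_n) (y : 'cV[R]_n)
  (j : nat) (v : 'cV[R]_n) : Prop :=
  exists a : 'I_j -> R, v = \sum_(i < j) a i *: iter i (mulmx C) y.

(* x is a (the) j-th MINRES iterate for C x = - b with initial guess x0:
   x in x0 + K_j(C, C x0 + b) minimizing ||C x + b|| over that affine space. *)
Definition minres_iterate (R : rcfType) (n : nat) (C : 'M[R]_n) (b x0 : 'cV[R]_n)
  (j : nat) (x : 'cV[R]_n) : Prop :=
  in_krylov C (C *m x0 + b) j (x - x0) /\
  forall x', in_krylov C (C *m x0 + b) j (x' - x0) ->
    vnorm (C *m x + b) <= vnorm (C *m x' + b).

Definition singular_triplet (R : rcfType) (p q : nat) (H : 'M[R]_(p, q))
  (sigma : R) (c : 'cV[R]_p) (d : 'cV[R]_q) : Prop :=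
  [/\ 0 <= sigma, c^T *m c = 1%:M, d^T *m d = 1%:M,
      H *m d = sigma *: c & H^T *m c = sigma *: d].

Definition is_singular_value (R : rcfType) (p q : nat) (H : 'M[R]_(p, q)) (sigma : R) :=
  exists c d, singular_triplet H sigma c d.

Definition Bmat (R : rcfType) (M N : nat) (A : 'M[R]_(M, N)) (tau : R) : 'M[R]_(M + N) :=
  block_mx (- tau%:M) A A^T (- tau%:M).

Definition Wmat (R : rcfType) (M N M' N' : nat) (P : 'M[R]_(M, M')) (Q : 'M[R]_(N, N'))
  : 'M[R]_(M + N, M' + N') := block_mx P 0 0 Q.

Definition resid (R : rcfType) (M N : nat) (A : 'M[R]_(M, N)) (theta : R)
  (u : 'cV[R]_M) (v : 'cV[R]_N) : 'cV[R]_(M + N) :=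
  col_mx (A *m v - theta *: u) (A^T *m u - theta *: v).

Definition Proj (R : rcfType) (M N : nat) (u : 'cV[R]_M) (v : 'cV[R]_N) : 'M[R]_(M + N) :=
  block_mx (1%:M - u *m u^T) 0 0 (1%:M - v *m v^T).

From HB Require Import structures.
From mathcomp Require Import all_boot all_order all_algebra.
Import Order.TTheory GRing.Theory Num.Theory.
Local Open Scope ring_scope.

(* W = diag(P1, Q1) is an isometry whose range is exactly the space of
   vectors (s; t) with s ⊥ u1, t ⊥ v1, and W W^T is the orthogonal projector
   onto it.  Since u1, v1 come from a singular triplet of the projected matrix,
   r lies in that range, so r = W r'; moreover B1 W = W B1'.  Hence W maps
   solutions, Krylov spaces K_j(B1', .) and residuals of the reduced system
   isometrically onto those of the full one, and the MINRES minimisation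
   problems of the two systems correspond under W. *)

Section Orthogonality.

Context {R : comPzRingType}.

Lemma dotmxC {p : nat} (x y : 'cV[R]_p) : x^T *m y = y^T *m x.
Proof.
apply/matrixP => i j; rewrite !ord1 !mxE; apply: eq_bigr => k _.
by rewrite !mxE mulrC.
Qed.

Lemma orthogonal_row_mx {q r : nat}
    (X : 'M[R]_(q + r, q)) (P : 'M[R]_(q + r, r)) :
  (row_mx X P)^T *m row_mx X P = 1%:M ->
  [/\ P^T *m X = 0, P^T *m P = 1%:M & X *m X^T + P *m P^T = 1%:M].
Proof.
move=> XP_orth; have XP_orthC := mulmx1C XP_orth.
rewrite tr_row_mx mul_col_row (scalar_mx_block q r 1) in XP_orth.
have [_ _ -> ->] := eq_block_mx XP_orth.
by rewrite tr_row_mx mul_row_col in XP_orthC.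
Qed.

Lemma perp_projector_id {p : nat} (u x : 'cV[R]_p) :
  u^T *m x = 0 -> (1%:M - u *m u^T) *m x = x.
Proof. by move=> ux0; rewrite mulmxBl mul1mx -mulmxA ux0 mulmx0 subr0. Qed.

Lemma ritz_residual_perp {p q k : nat} (A : 'M[R]_(p, q))
    (U : 'M[R]_(p, k)) (V : 'M[R]_(q, k)) (theta : R) (c d : 'cV[R]_k) :
  U^T *m U = 1%:M -> U^T *m A *m V *m d = theta *: c ->
  (U *m c)^T *m (A *m (V *m d) - theta *: (U *m c)) = 0.
Proof.
move=> UU Hd; rewrite mulmxBr -scalemxAr trmx_mul.
rewrite -mulmxA [U^T *m (U *m c)]mulmxA UU mul1mx.
have -> : c^T *m U^T *m (A *m (V *m d)) = c^T *m (U^T *m A *m V *m d).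
  by rewrite !mulmxA.
by rewrite Hd -scalemxAr subrr.
Qed.

End Orthogonality.

Lemma Proj_col_mx {R : rcfType} {M N : nat} (u s : 'cV[R]_M) (v t : 'cV[R]_N) :
  u^T *m s = 0 -> v^T *m t = 0 -> Proj u v *m col_mx s t = col_mx s t.
Proof.
move=> us0 vt0; rewrite /Proj mul_block_col !mul0mx addr0 add0r.
by rewrite !perp_projector_id.
Qed.

Lemma Wmat_isometry {R : rcfType} {M N M' N' : nat}
    (P : 'M[R]_(M, M')) (Q : 'M[R]_(N, N')) :
  P^T *m P = 1%:M -> Q^T *m Q = 1%:M -> (Wmat P Q)^T *m Wmat P Q = 1%:M.
Proof.
move=> PP QQ; rewrite /Wmat tr_block_mx mulmx_block !trmx0.
by rewrite !mulmx0 !mul0mx !addr0 !add0r PP QQ -scalar_mx_block.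
Qed.

Lemma Wmat_mulmx_tr {R : rcfType} {M N M' N' : nat}
    (u : 'cV[R]_M) (v : 'cV[R]_N) (P : 'M[R]_(M, M')) (Q : 'M[R]_(N, N')) :
  u *m u^T + P *m P^T = 1%:M -> v *m v^T + Q *m Q^T = 1%:M ->
  Wmat P Q *m (Wmat P Q)^T = Proj u v.
Proof.
move=> uP vQ; rewrite /Wmat /Proj tr_block_mx mulmx_block !trmx0.
by rewrite !mulmx0 !mul0mx !addr0 !add0r -uP -vQ ![_ + _ - _]addrC !addKr.
Qed.

Lemma Proj_resid {R : rcfType} {M N k : nat} (A : 'M[R]_(M, N))
    (U : 'M[R]_(M, k)) (V : 'M[R]_(N, k)) (theta : R) (c d : 'cV[R]_k) :
  U^T *m U = 1%:M -> V^T *m V = 1%:M ->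
  singular_triplet (U^T *m A *m V) theta c d ->
  Proj (U *m c) (V *m d) *m resid A theta (U *m c) (V *m d)
  = resid A theta (U *m c) (V *m d).
Proof.
move=> UU VV [_ _ _ Hd Hc]; rewrite Proj_col_mx //.
  exact: ritz_residual_perp UU Hd.
apply: ritz_residual_perp VV _.
by rewrite -Hc !trmx_mul trmxK !mulmxA.
Qed.

Section Intertwining.

Context {R : comPzRingType} {p q : nat}.
Context {W : 'M[R]_(p, q)} {C : 'M[R]_p} {C' : 'M[R]_q}.
Hypothesis CW : C *m W = W *m C'.

Lemma iter_mulmx_intertwine (i : nat) (y : 'cV[R]_q) :
  iter i (mulmx C) (W *m y) = W *m iter i (mulmx C') y.
Proof. by elim: i => [|i IH] //=; rewrite IH mulmxA CW mulmxA. Qed.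

Lemma mulmx_krylov_sum (j : nat) (a : 'I_j -> R) (y : 'cV[R]_q) :
  W *m (\sum_(i < j) a i *: iter i (mulmx C') y)
  = \sum_(i < j) a i *: iter i (mulmx C) (W *m y).
Proof.
rewrite mulmx_sumr; apply: eq_bigr => i _.
by rewrite iter_mulmx_intertwine scalemxAr.
Qed.

Lemma residual_mulmx (b' z : 'cV[R]_q) :
  C *m (W *m z) + W *m b' = W *m (C' *m z + b').
Proof. by rewrite mulmxA CW -mulmxA mulmxDr. Qed.

Lemma mulmx_tr_solution (b' : 'cV[R]_q) (x : 'cV[R]_p) :
  W^T *m W = 1%:M -> x = W *m (W^T *m x) -> C *m x = - (W *m b') ->
  C' *m (W^T *m x) = - b'.
Proof.
move=> WW xE Cx; rewrite -[LHS]mul1mx -WW -mulmxA [W *m _]mulmxA -CW.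
by rewrite -mulmxA -xE Cx mulmxN mulmxA WW mul1mx.
Qed.

End Intertwining.

Lemma vnormE {R : rcfType} {p : nat} (x : 'cV[R]_p) :
  vnorm x = Num.sqrt ((x^T *m x) 0 0).
Proof.
rewrite /vnorm mxE; congr Num.sqrt; apply: eq_bigr => i _.
by rewrite !mxE expr2.
Qed.

Lemma vnorm_isometry {R : rcfType} {p q : nat}
    (W : 'M[R]_(p, q)) (y : 'cV[R]_q) :
  W^T *m W = 1%:M -> vnorm (W *m y) = vnorm y.
Proof.
by move=> WW; rewrite !vnormE trmx_mul mulmxA -(mulmxA y^T) WW mulmx1.
Qed.

Section MinresIsometry.

Context {R : rcfType} {p q : nat}.
Context {W : 'M[R]_(p, q)} {C : 'M[R]_p} {C' : 'M[R]_q} {b' : 'cV[R]_q}.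
Hypotheses (WW : W^T *m W = 1%:M) (CW : C *m W = W *m C').

Lemma in_krylov_mulmx (j : nat) (y v : 'cV[R]_q) :
  in_krylov C' y j v -> in_krylov C (W *m y) j (W *m v).
Proof. by case=> a ->; exists a; rewrite (mulmx_krylov_sum CW). Qed.

Lemma in_krylov_mulmxP (j : nat) (y : 'cV[R]_q) (x : 'cV[R]_p) :
  in_krylov C (W *m y) j x -> exists2 v, x = W *m v & in_krylov C' y j v.
Proof.
by case=> a ->; exists (\sum_(i < j) a i *: iter i (mulmx C') y);
  [rewrite (mulmx_krylov_sum CW) | exists a].
Qed.

Lemma minres_iterate_mulmx (z0 z : 'cV[R]_q) (j : nat) :
  minres_iterate C' b' z0 j z ->
  minres_iterate C (W *m b') (W *m z0) j (W *m z).
Proof.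
case=> z_kry z_min; rewrite /minres_iterate (residual_mulmx CW).
split; first by rewrite -mulmxBr; apply: in_krylov_mulmx.
move=> x' /in_krylov_mulmxP [v x'E v_kry].
have -> : x' = W *m (v + z0) by rewrite mulmxDr -x'E subrK.
rewrite !(residual_mulmx CW) !vnorm_isometry //.
by apply: z_min; rewrite addrK.
Qed.

Lemma minres_iterate_mulmxP (z0 : 'cV[R]_q) (w : 'cV[R]_p) (j : nat) :
  minres_iterate C (W *m b') (W *m z0) j w ->
  exists2 z, minres_iterate C' b' z0 j z & w = W *m z.
Proof.
rewrite /minres_iterate (residual_mulmx CW).
case=> /in_krylov_mulmxP [v wE v_kry] w_min.
have {}wE : w = W *m (v + z0) by rewrite mulmxDr -wE subrK.
exists (v + z0) => //; split; first by rewrite addrK.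
move=> z' z'_kry; have := w_min (W *m z').
rewrite wE !(residual_mulmx CW) !vnorm_isometry //; apply.
by rewrite -mulmxBr; apply: in_krylov_mulmx.
Qed.

Lemma minres_residual_vnorm_eq (z0 z : 'cV[R]_q) (w : 'cV[R]_p) (j : nat) :
  minres_iterate C (W *m b') (W *m z0) j w -> minres_iterate C' b' z0 j z ->
  vnorm (C *m w + W *m b') = vnorm (C' *m z + b').
Proof.
move=> w_it z_it; apply/le_anti/andP; split.
- move/minres_iterate_mulmx: z_it => [Wz_kry _]; case: w_it => _ w_min.
  by have := w_min _ Wz_kry; rewrite (residual_mulmx CW) vnorm_isometry.
- case/minres_iterate_mulmxP: w_it => z1 [z1_kry _] ->.
  rewrite (residual_mulmx CW) vnorm_isometry //.
  by case: z_it => _; apply.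
Qed.

End MinresIsometry.

(* M = m.+1, N = n.+1 (so M - 1 = m, N - 1 = n, M + N - 2 = m + n). *)
Theorem theorem3p1 (R : rcfType) (m n k : nat) (hMN : (n <= m)%N)
  (A : 'M[R]_(m.+1, n.+1)) (tau : R) (htau : 0 <= tau)
  (U : 'M[R]_(m.+1, k)) (V : 'M[R]_(n.+1, k))
  (hU : U^T *m U = 1%:M) (hV : V^T *m V = 1%:M)
  (theta : R) (c d : 'cV[R]_k)
  (htrip : singular_triplet (U^T *m A *m V) theta c d)
  (hclosest : forall sigma, is_singular_value (U^T *m A *m V) sigma ->
                `|theta - tau| <= `|sigma - tau|)
  (P1 : 'M[R]_(m.+1, m)) (Q1 : 'M[R]_(n.+1, n))
  (hP1 : (row_mx (U *m c) P1)^T *m row_mx (U *m c) P1 = 1%:M)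
  (hQ1 : (row_mx (V *m d) Q1)^T *m row_mx (V *m d) Q1 = 1%:M) :
  let u1 := U *m c in
  let v1 := V *m d in
  let B := Bmat A tau in
  let W := Wmat P1 Q1 in
  let B1' := W^T *m B *m W in
  let B1 := W *m B1' *m W^T in
  let r := resid A theta u1 v1 in
  let r' := W^T *m r in
  let Pi := Proj u1 v1 in
  [/\ Pi *m B *m Pi = B1,
      (forall (s : 'cV[R]_m.+1) (t : 'cV[R]_n.+1),
         s^T *m u1 = 0 -> t^T *m v1 = 0 ->
         Pi *m B *m Pi *m col_mx s t = - r ->
         exists z, col_mx s t = W *m z /\ B1' *m z = - r'),
      (forall z, B1' *m z = - r' ->
         exists (s : 'cV[R]_m.+1) (t : 'cV[R]_n.+1),
           [/\ W *m z = col_mx s t, s^T *m u1 = 0, t^T *m v1 = 0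
             & Pi *m B *m Pi *m (W *m z) = - r]),
      (forall w0 z0 j, w0 = W *m z0 -> (1 <= j <= m + n)%N ->
         (forall z, minres_iterate B1' r' z0 j z ->
                    minres_iterate B1 r w0 j (W *m z)) /\
         (forall w, minres_iterate B1 r w0 j w ->
                    exists z, minres_iterate B1' r' z0 j z /\ w = W *m z))
    & (forall w0 z0 j w z, w0 = W *m z0 -> (j <= m + n)%N ->
         minres_iterate B1 r w0 j w -> minres_iterate B1' r' z0 j z ->
         vnorm (B1 *m w + r) = vnorm (B1' *m z + r'))].
Proof.
move=> u1 v1 B W B1' B1 r r' Pi.
case/orthogonal_row_mx: hP1 => P1u1 P1P1 u1P1.
case/orthogonal_row_mx: hQ1 => Q1v1 Q1Q1 v1Q1.
have WW : W^T *m W = 1%:M by apply: Wmat_isometry.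
have WWT : W *m W^T = Pi by apply: Wmat_mulmx_tr.
have B1W : B1 *m W = W *m B1' by rewrite -mulmxA WW mulmx1.
have PiBPi : Pi *m B *m Pi = B1 by rewrite -WWT /B1 /B1' !mulmxA.
have r_range : r = W *m r' by rewrite /r' mulmxA WWT Proj_resid.
split => //.
- move=> s t s_u1 t_v1; rewrite PiBPi r_range => st_sol.
  have st_range : col_mx s t = W *m (W^T *m col_mx s t).
    by rewrite mulmxA WWT Proj_col_mx // dotmxC.
  exists (W^T *m col_mx s t); split => //.
  exact: (mulmx_tr_solution B1W _ _ WW st_range st_sol).
- move=> z z_sol; exists (P1 *m usubmx z), (Q1 *m dsubmx z); split.
  + by rewrite -{1}(vsubmxK z) /W /Wmat mul_block_col !mul0mx addr0 add0r.
  + by rewrite trmx_mul -mulmxA P1u1 mulmx0.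
  + by rewrite trmx_mul -mulmxA Q1v1 mulmx0.
  + by rewrite PiBPi mulmxA B1W -mulmxA z_sol mulmxN -r_range.
- move=> w0 z0 j -> _; rewrite r_range; split.
  + by move=> z; apply: minres_iterate_mulmx.
  + by move=> w /(minres_iterate_mulmxP WW B1W)[z]; exists z.
- by move=> w0 z0 j w z -> _; rewrite r_range; apply: minres_residual_vnorm_eq.
Qed.
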